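(* Let $H$ be a digraph (possibly with loops) and let $D$ be an $H$-colored semicomplete digraph in which every directed $3$-cycle is an $H$-cycle. If $k \geq 2$, then $D$ has a $(k,H)$-kernel.
   Context: All digraphs are finite. A digraph is semicomplete if every two distinct vertices are joined by at least one arc. $D$ has no loops and comes with a map $\rho: A(D)\to V(H)$. For a walk $W=(x_0,\ldots,x_n)$ in $D$, there is an obstruction on $x_i$ if $(\rho(x_{i-1},x_i),\rho(x_i,x_{i+1})) \notin A(H)$; for an open walk this is considered at internal vertices $x_i$, $1\le i\le n-1$, for a closed walk at all $i\in\{0,\ldots,n-1\}$ with indices modulo $n$. $O_H(W)$ is the set of indices with an obstruction; the $H$-length is $l_H(W)=|O_H(W)|+1$ for open $W$ and $|O_H(W)|$ for closed $W$. An $H$-cycle is a directed cycle with no obstructions (the consecutive colours of its arcs, cyclically, form a closed walk in $H$). A $(k,H)$-kernel ($k\ge2$) is a set $S\subseteq V(D)$ such that for every two distinct $u,v\in S$ every directed $uv$-path in $D$ has $H$-length at least $k$, and for every $x\in V(D)\setminus S$ there is a directed path from $x$ to a vertex of $S$ of $H$-length at most $k-1$. *)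

From mathcomp Require Import all_boot.
Set Implicit Arguments. Unset Strict Implicit. Unset Printing Implicit Defensive.

Section HColoured.
(* D : finite digraph on V with arc relation A; rho : colouring of arcs
   (a total function on pairs; only its values on arcs of D matter). *)
Variables (VH : finType) (HA : rel VH) (V : finType) (A : rel V)
          (rho : V -> V -> VH).

Definition loopless : Prop := forall x : V, ~~ A x x.

Definition semicomplete : Prop :=
  forall u v : V, u != v -> A u v || A v u.

Definition dipath (u v : V) (s : seq V) : Prop :=
  match s with
  | [::] => False
  | x :: p => [/\ x = u, last x p = v, path A x p & uniq (x :: p)]
  end.

Fixpoint nobs (s : seq V) : nat :=
  match s with
  | x :: ((y :: z :: _) as t) => (~~ HA (rho x y) (rho y z)) + nobs t
  | _ => 0
  end.

Definition Hlength (s : seq V) : nat := (nobs s).+1.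

Definition dicycle3 (x y z : V) : Prop :=
  [/\ x != y, y != z, z != x & [/\ A x y, A y z & A z x]].

Definition Hcycle3 (x y z : V) : Prop :=
  [/\ HA (rho z x) (rho x y), HA (rho x y) (rho y z) & HA (rho y z) (rho z x)].

Definition kH_kernel (k : nat) (S : {set V}) : Prop :=
  (forall u v, u \in S -> v \in S -> u != v ->
     forall s, dipath u v s -> k <= Hlength s) /\
  (forall x, x \notin S ->
     exists v, v \in S /\ exists s, dipath x v s /\ Hlength s <= k - 1).

End HColoured.

From mathcomp Require Import all_boot.

(* Some vertex v is reached from every vertex by a path without obstructions,
   and then [set v] is a (k,H)-kernel for every k >= 2.  Such a v is found by
   adding the vertices one at a time: when the new vertex w has no arc to the
   current v, there is an arc v -> w and w takes over.  A path x -> ... -> v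
   without obstructions is rerouted to w by leaving it at the first vertex y
   with an arc y -> w.  Unless y = x, the predecessor u of y has no arc to w,
   so u -> y -> w -> u is a directed 3-cycle; being an H-cycle, it leaves no
   obstruction at y. *)

Set Implicit Arguments.
Unset Strict Implicit.
Unset Printing Implicit Defensive.

Section Absorption.

Variables (VH : finType) (HA : rel VH) (V : finType) (A : rel V)
          (rho : V -> V -> VH).
Hypothesis semiA : semicomplete A.
Hypothesis dicycle3_Hcycle3 :
  forall x y z : V, dicycle3 A x y z -> Hcycle3 HA rho x y z.

Definition Hpath (x : V) (p : seq V) : bool :=
  [&& path A x p, uniq (x :: p) & nobs HA rho (x :: p) == 0].

Lemma Hpath0 (x : V) : Hpath x [::].
Proof. by rewrite /Hpath /= eqxx. Qed.

Lemma Hpath1 (x y : V) : Hpath x [:: y] = A x y && (x != y).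
Proof. by rewrite /Hpath /= inE !andbT. Qed.

Lemma Hpath_cons2 (x y z : V) (s : seq V) :
  Hpath x [:: y, z & s] =
  [&& A x y, x \notin [:: y, z & s], HA (rho x y) (rho y z)
    & Hpath y (z :: s)].
Proof.
rewrite /Hpath.
have -> : nobs HA rho [:: x, y, z & s] =
  ~~ HA (rho x y) (rho y z) + nobs HA rho [:: y, z & s] by [].
rewrite [path _ x _]/= cons_uniq addn_eq0 eqb0 negbK.
rewrite [path A y _]/=.
by case: (A x y); case: (HA (rho x y) (rho y z));
  case: (x \in [:: y, z & s]); rewrite /= ?andbF.
Qed.

Definition absorbs (U : seq V) (v : V) : Prop :=
  forall x, x \in U ->
    exists p, [/\ Hpath x p, last x p = v & {subset p <= U}].

Lemma Hpath_reroute (w : V) (p : seq V) (x : V) :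
  Hpath x p -> w \notin x :: p -> A (last x p) w ->
  exists s, [/\ Hpath x s, last x s = w, {subset s <= w :: p}
    & head w s \in [:: w; head w p]].
Proof.
have jump x' p' : A x' w -> x' != w ->
    exists s, [/\ Hpath x' s, last x' s = w, {subset s <= w :: p'}
      & head w s \in [:: w; head w p']].
  move=> Axw xw; exists [:: w]; split; rewrite ?Hpath1 ?Axw ?mem_head //.
  by move=> u /[1!inE] /eqP->; exact: mem_head.
elim: p x => [|y p IHp] x Hxp; rewrite in_cons negb_or eq_sym => /andP[xw wNp].
  by move=> Axw; apply: jump.
move=> /= Alast; have [/jump/(_ xw)//|nAxw] := boolP (A x w).
have Awx : A w x by move: (semiA xw); rewrite (negbTE nAxw).
have [Axy xNyp Hyp] : [/\ A x y, x \notin y :: p & Hpath y p].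
  case: p {IHp wNp Alast} Hxp => [|z p].
    by rewrite Hpath1 mem_seq1 Hpath0 => /andP[].
  by rewrite Hpath_cons2 => /and4P[].
have yw : y != w by move: wNp; rewrite in_cons negb_or eq_sym => /andP[].
have /norP[xy xNp] : ~~ ((x == y) || (x \in p)) by rewrite -in_cons.
(* Either z = w, and x -> y -> w -> x is a directed 3-cycle, or z follows y on
   the original path. *)
have HAy z : z \in [:: w; head w p] -> A y z -> HA (rho x y) (rho y z).
  have HAyw : A y w -> HA (rho x y) (rho y w).
    move=> Ayw; have [] // := dicycle3_Hcycle3 (x := x) (y := y) (z := w).
    by split; rewrite // eq_sym.
  case: p {IHp Hyp wNp Alast xNyp xNp} Hxp => [|z' p] /=.
    by rewrite !inE orbb => _ /eqP->.
  by rewrite Hpath_cons2 !inE => /and4P[_ _ HAxyz' _] /orP[] /eqP->.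
have [[|z s] [Hys lys s_sub hs]] := IHp y Hyp wNp Alast.
  by rewrite /= in lys; rewrite lys eqxx in yw.
exists [:: y, z & s]; split=> //; last by rewrite !inE eqxx orbT.
  have /andP[/andP[Ayz _] _] := Hys.
  rewrite Hpath_cons2 Axy Hys HAy // !andbT [_ \in _]in_cons negb_or xy /=.
  by apply/negP => /s_sub; rewrite in_cons (negbTE xw) (negbTE xNp).
move=> u /[1!in_cons] /predU1P[->|/s_sub]; first by rewrite !inE eqxx orbT.
by rewrite !inE => /orP[->|->]; rewrite ?orbT.
Qed.

Lemma absorbs_kH_kernel (k : nat) (v : V) :
  2 <= k -> absorbs (enum V) v -> kH_kernel HA A rho k [set v].
Proof.
move=> k_ge2 absorbs_v.
split=> [u u' /set1P-> /set1P->|x]; first by rewrite eqxx.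
rewrite in_set1 => xv; exists v; split; first exact: set11.
have [p [/and3P[pathp uniqp /eqP nobs0] lxp _]] := absorbs_v x (mem_enum _ x).
exists (x :: p); split=> //.
by rewrite /Hlength nobs0 leq_subRL // ltnW.
Qed.

Lemma absorbing_vertex (U : seq V) :
  uniq U -> U != [::] -> exists2 v, v \in U & absorbs U v.
Proof.
elim: U => [|w U IHU] //; rewrite cons_uniq => /andP[wNU uniqU] _.
have [->|U0] := eqVneq U [::].
  exists w; first exact: mem_head.
  move=> x; rewrite mem_seq1 => /eqP->; exists [::].
  by split; [exact: Hpath0 | |].
have [v vU absorbs_v] := IHU uniqU U0.
have wv : w != v by apply: contraNneq wNU => ->.
have [Awv|nAwv] := boolP (A w v).
  exists v; first by rewrite in_cons vU orbT.
  move=> x /[1!in_cons] /predU1P[->|xU].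
    exists [:: v]; split; rewrite ?Hpath1 ?Awv //.
    by move=> u; rewrite mem_seq1 => /eqP->; rewrite in_cons vU orbT.
  have [p [Hxp lxp pU]] := absorbs_v x xU.
  by exists p; split=> // u /pU uU; rewrite in_cons uU orbT.
have Avw : A v w by move: (semiA wv); rewrite (negbTE nAwv).
exists w; first exact: mem_head.
move=> x /[1!in_cons] /predU1P[->|xU].
  by exists [::]; split; [exact: Hpath0 | |].
have [p [Hxp lxp pU]] := absorbs_v x xU.
have wNxp : w \notin x :: p.
  rewrite in_cons negb_or; apply/andP; split.
    by apply: contraNneq wNU => ->.
  by apply: contra wNU => /pU.
have Alast : A (last x p) w by rewrite lxp.
have [s [Hxs lxs s_sub _]] := Hpath_reroute Hxp wNxp Alast.
exists s; split=> // u /s_sub /[1!in_cons] /predU1P[->|/pU uU].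
  exact: mem_head.
by rewrite in_cons uU orbT.
Qed.

End Absorption.

Theorem theorem7 (VH : finType) (HA : rel VH) (V : finType) (A : rel V)
  (rho : V -> V -> VH)
  (hloop : loopless A) (hsemi : semicomplete A)
  (h3 : forall x y z : V, dicycle3 A x y z -> Hcycle3 HA rho x y z)
  (k : nat) (hk : 2 <= k) :
  exists S : {set V}, kH_kernel HA A rho k S.
Proof.
have [V0|enumV_neq0] := eqVneq (enum V) [::].
  exists set0; split=> [u|x _]; first by rewrite inE.
  by have := mem_enum V x; rewrite V0.
have [v _ absorbs_v] := absorbing_vertex hsemi h3 (enum_uniq V) enumV_neq0.
by exists [set v]; apply: absorbs_kH_kernel.
Qed.
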